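(* Let $B>0$, $\epsilon\in(0,2B)$ and $c=\frac{1}{2B-\epsilon}$ (so $c>\frac{1}{2B}$). Define $f(z)=\operatorname{sinc}(\epsilon z)e^{\pi i(2B-\epsilon)z}$ and $g(z)=\operatorname{sinc}(\epsilon z)e^{-\pi i(2B-\epsilon)z}$ for $z\in\mathbb{C}$. Then $f,g\in\mathrm{PW}^2_B$ (explicitly, $f(z)=\frac1\epsilon\int_{-B}^B\chi_{[B-\epsilon,B]}(\xi)e^{2\pi i\xi z}\,d\xi$ and $g(z)=\frac1\epsilon\int_{-B}^B\chi_{[-B,-B+\epsilon]}(\xi)e^{2\pi i\xi z}\,d\xi$), and for all $t\in\mathbb{R}$ we have $|f(t)|=|g(t)|$ and $f(t)\overline{f(t-c)}=g(t)\overline{g(t-c)}$, but there is no $\alpha\in\mathbb{R}$ with $f=e^{i\alpha}g$.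
   Context: $\operatorname{sinc}(z)=\frac{\sin(\pi z)}{\pi z}$ for $z\neq0$ and $\operatorname{sinc}(0)=1$. For $B>0$, the Paley--Wiener space is $\mathrm{PW}^2_B:=\{f:\mathbb{C}\to\mathbb{C} \mid \exists F\in L^2([-B,B])\ \forall z\in\mathbb{C}: f(z)=\int_{-B}^B F(\xi)e^{2\pi i \xi z}\,d\xi\}$. $\chi_I$ denotes the indicator function of the set $I$. *)

From mathcomp Require Import all_boot all_algebra.
From mathcomp Require Import all_classical all_reals all_analysis.
From mathcomp Require Import complex.
Import GRing.Theory Num.Theory.
Local Open Scope ring_scope.
Local Open Scope classical_set_scope.
Local Open Scope complex_scope.

Section Defs.
Variable R : realType.

Definition cexp (z : R[i]) : R[i] :=
  (expR (complex.Re z))%:C * ((cos (complex.Im z))%:C + 'i * (sin (complex.Im z))%:C).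

Definition csin (w : R[i]) : R[i] := (cexp ('i * w) - cexp (- ('i * w))) / (2 * 'i).

Definition sinc (z : R[i]) : R[i] :=
  if z == 0 then 1 else csin (pi%:C * z) / (pi%:C * z).

Definition cintegral (D : set R) (h : R -> R[i]) : R[i] :=
  (Rintegral lebesgue_measure D (fun x => complex.Re (h x)))%:C
  + 'i * (Rintegral lebesgue_measure D (fun x => complex.Im (h x)))%:C.

Definition L2on (a b : R) (F : R -> R[i]) : Prop :=
  measurable_fun `[a, b] (fun x => complex.Re (F x)) /\
  measurable_fun `[a, b] (fun x => complex.Im (F x)) /\
  (\int[lebesgue_measure]_(x in `[a, b])
      ((complex.Re (F x)) ^+ 2 + (complex.Im (F x)) ^+ 2)%:E < +oo)%E.

Definition PW (B : R) (f : R[i] -> R[i]) : Prop :=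
  exists F : R -> R[i], L2on (- B) B F /\
    forall z : R[i],
      f z = cintegral `[- B, B] (fun xi => F xi * cexp (2%:R * pi%:C * 'i * xi%:C * z)).

End Defs.

Arguments cexp {R}.
Arguments csin {R}.
Arguments sinc {R}.
Arguments cintegral {R}.
Arguments L2on {R}.
Arguments PW {R}.

From mathcomp Require Import all_boot all_algebra.
From mathcomp Require Import all_classical all_reals all_analysis.
From mathcomp Require Import complex ring lra.
Import order.Order.TTheory GRing.Theory Num.Theory.
Import numFieldNormedType.Exports.
Local Open Scope ring_scope.
Local Open Scope classical_set_scope.
Local Open Scope complex_scope.

(* Both are Fourier transforms of normalised windows:
   int_a^b e^{2 pi i xi z} dxi = (b - a) sinc((b - a) z) e^{pi i (a + b) z},
   with [a, b] = [B - eps, B] for f and [-B, -B + eps] for g.  This window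
   formula follows from the fundamental theorem of calculus for the primitive
   u e^{x w} / w of u e^{x w} (checked on real parts; imaginary parts are real
   parts of -i times the integrand), together with the expression of sinc as a
   difference quotient of exponentials.  Indicators are square integrable, so
   f and g lie in PW^2_B.

   On the real line f(t) = s(t) e^{i theta t} with s real and g(t) = conj f(t),
   theta = pi (2B - eps).  Hence |f| = |g|; and as theta c = pi, the product
   f(t) conj f(t - c) is real, which gives the equality of phase products.
   Finally f = e^{i alpha} g forces e^{i alpha} = 1 (evaluate at 0), so f(t)
   would be real, which fails at t = 1/(2B). *)

Section ComplexExponential.
Variable R : realType.
Implicit Types (r x : R) (u v w : R[i]).

Lemma Re_realM r w : complex.Re (r%:C * w) = r * complex.Re w.
Proof. by case: w => a b; simpc. Qed.

Lemma Im_realM r w : complex.Im (r%:C * w) = r * complex.Im w.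
Proof. by case: w => a b; simpc. Qed.

Lemma Re_mul u v : complex.Re (u * v) =
  complex.Re u * complex.Re v - complex.Im u * complex.Im v.
Proof. by case: u => a b; case: v => c d; simpc. Qed.

Lemma Im_mul u v : complex.Im (u * v) =
  complex.Re u * complex.Im v + complex.Im u * complex.Re v.
Proof. by case: u => a b; case: v => c d; simpc. Qed.

Lemma Re_sub u v : complex.Re (u - v) = complex.Re u - complex.Re v.
Proof. by case: u => a b; case: v => c d; simpc. Qed.

(* lets imaginary-part integrals be handled as real-part integrals *)
Lemma Im_as_Re w : complex.Im w = complex.Re (- 'i * w).
Proof. by case: w => a b; simpc. Qed.

Lemma Creal_eq0 r : (r%:C == 0 :> R[i]) = (r == 0).
Proof. by rewrite eq_complex /= eqxx andbT. Qed.

Lemma Ci_neq0 : ('i : R[i]) != 0.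
Proof. by rewrite eq_complex /= oner_eq0 andbF. Qed.

Lemma Cpi_neq0 : (pi%:C : R[i]) != 0.
Proof. by rewrite Creal_eq0 gt_eqF // pi_gt0. Qed.

Lemma cexpD u v : cexp (u + v) = cexp u * cexp v.
Proof.
case: u => a b; case: v => c d; rewrite /cexp /=; simpc.
by apply/eqP; rewrite eq_complex /= expRD cosD sinD; apply/andP; split; apply/eqP; ring.
Qed.

Lemma cexp0 : cexp (0 : R[i]) = 1.
Proof. by rewrite /cexp /= expR0 cos0 sin0; apply/eqP; rewrite eq_complex /=; simpc. Qed.

Lemma cexp_iR x : cexp ('i * x%:C) = cos x +i* sin x.
Proof. by rewrite /cexp /=; simpc; rewrite /= expR0 !mul1r. Qed.

Lemma cexp_iRN x : cexp (- ('i * x%:C)) = cos x +i* - sin x.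
Proof. by rewrite /cexp /=; simpc; rewrite expR0 cosN sinN !mul1r. Qed.

Lemma Re_cexp_line x w :
  complex.Re (cexp (x%:C * w)) = expR (complex.Re w * x) * cos (complex.Im w * x).
Proof. by case: w => a b; rewrite /cexp /=; simpc; rewrite (mulrC x) (mulrC x). Qed.

Lemma Im_cexp_line x w :
  complex.Im (cexp (x%:C * w)) = expR (complex.Re w * x) * sin (complex.Im w * x).
Proof. by case: w => a b; rewrite /cexp /=; simpc; rewrite (mulrC x) (mulrC x). Qed.

Lemma csin_real x : csin x%:C = (sin x)%:C.
Proof.
rewrite /csin cexp_iR cexp_iRN.
have i2 : (2 * 'i : R[i]) != 0 by rewrite mulf_neq0 ?Ci_neq0 // pnatr_eq0.
apply: (mulIf i2); rewrite divfK //.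
by apply/eqP; rewrite eq_complex /=; simpc; apply/eqP; ring.
Qed.

Definition sincR x : R := if x == 0 then 1 else sin (pi * x) / (pi * x).

Lemma sinc_real x : sinc x%:C = (sincR x)%:C.
Proof.
rewrite /sinc /sincR Creal_eq0; case: ifP => // _.
by rewrite -rmorphM csin_real fmorph_div.
Qed.

Lemma sin_pi_gt0 x : 0 < x < 1 -> 0 < sin (pi * x).
Proof.
case/andP=> x0 x1; apply: sin_gt0_pi.
by rewrite mulr_gt0 ?pi_gt0 // -[X in _ < X]mulr1 ltr_pM2l // pi_gt0.
Qed.

Lemma sincR_gt0 x : 0 < x < 1 -> 0 < sincR x.
Proof.
move=> x01; have /andP[x0 _] := x01.
rewrite /sincR gt_eqF //; apply: divr_gt0; first exact: sin_pi_gt0.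
by rewrite mulr_gt0 // pi_gt0.
Qed.

Lemma sinc_modulation a b (z : R[i]) : a < b -> z != 0 ->
  let w := 2%:R * pi%:C * 'i * z in
  sinc ((b - a)%:C * z) * cexp (pi%:C * 'i * (a + b)%:C * z) =
  (cexp (b%:C * w) - cexp (a%:C * w)) / ((b - a)%:C * w).
Proof.
move=> ab z0 w.
have ba : (b - a)%:C != 0 :> R[i] by rewrite Creal_eq0 subr_eq0 gt_eqF.
have baz : (b - a)%:C * z != 0 by rewrite mulf_neq0.
have Eb : cexp (b%:C * w) = cexp ('i * (pi%:C * ((b - a)%:C * z))) *
    cexp (pi%:C * 'i * (a + b)%:C * z).
  by rewrite -cexpD /w; congr cexp; rewrite rmorphB rmorphD; ring.
have Ea : cexp (a%:C * w) = cexp (- ('i * (pi%:C * ((b - a)%:C * z)))) *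
    cexp (pi%:C * 'i * (a + b)%:C * z).
  by rewrite -cexpD /w; congr cexp; rewrite rmorphB rmorphD; ring.
rewrite /sinc (negbTE baz) /csin Eb Ea /w.
move: (Cpi_neq0); generalize (pi%:C : R[i]) => p p0.
by field; rewrite z0 Ci_neq0 -rmorphB ba p0.
Qed.

End ComplexExponential.

Arguments sincR {R}.

Section LineIntegrals.
Variable R : realType.
Implicit Types (a b x : R) (u w : R[i]).

Lemma is_derive_scale a x : is_derive x 1 (fun y : R => a * y) a.
Proof. by rewrite -[X in is_derive _ _ _ X]mulr1; exact: is_deriveZ. Qed.

Lemma is_derive_expR_scale a x :
  is_derive x 1 (fun y : R => expR (a * y)) (expR (a * x) * a).
Proof. exact: is_derive1_comp (is_derive_expR _) (is_derive_scale a x). Qed.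

Lemma is_derive_cos_scale b x :
  is_derive x 1 (fun y : R => cos (b * y)) (- sin (b * x) * b).
Proof. exact: is_derive1_comp (is_derive_cos _) (is_derive_scale b x). Qed.

Lemma is_derive_sin_scale b x :
  is_derive x 1 (fun y : R => sin (b * y)) (cos (b * x) * b).
Proof. exact: is_derive1_comp (is_derive_sin _) (is_derive_scale b x). Qed.

(* the real part of y |-> u exp(y w) has derivative Re (u w exp(y w)),
   computed from Re (u exp(y w)) = e^{a y} (p cos (b y) - q sin (b y)) *)
Lemma is_derive_Re_cexp_line u w x :
  is_derive x 1 (fun y : R => complex.Re (u * cexp (y%:C * w)))
    (complex.Re (u * w * cexp (x%:C * w))).
Proof.
set a := complex.Re w; set b := complex.Im w.
set p := complex.Re u; set q := complex.Im u.
have -> : (fun y : R => complex.Re (u * cexp (y%:C * w))) =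
    p \*: ((fun y => expR (a * y)) * (fun y => cos (b * y))) -
    q \*: ((fun y => expR (a * y)) * (fun y => sin (b * y))).
  by apply: funext => y; rewrite Re_mul (Re_cexp_line _ y w) (Im_cexp_line _ y w).
apply: (is_derive_eq (is_deriveB
  (is_deriveZ p (is_deriveM (is_derive_expR_scale a x) (is_derive_cos_scale b x)))
  (is_deriveZ q (is_deriveM (is_derive_expR_scale a x) (is_derive_sin_scale b x))))).
rewrite Re_mul (Re_cexp_line _ x w) (Im_cexp_line _ x w) Re_mul Im_mul -/a -/b -/p -/q.
by rewrite /GRing.scale /=; ring.
Qed.

Lemma is_derive_continuous {F f : R -> R} :
  (forall x, is_derive x 1 F (f x)) -> continuous F.
Proof.
move=> dF x; apply: differentiable_continuous; apply/derivable1_diffP.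
by have [] := dF x.
Qed.

Lemma Rintegral_derive (F f : R -> R) a b : a < b ->
  (forall x, is_derive x 1 F (f x)) -> continuous f ->
  \int[lebesgue_measure]_(x in `[a, b]) f x = F b - F a.
Proof.
move=> ab dF cf; rewrite /Rintegral (continuous_FTC2 (F := F) ab) //.
- exact: continuous_subspaceT.
- have cF := is_derive_continuous dF; split.
  + by move=> x _; have [] := dF x.
  + exact/cvg_at_right_filter/cF.
  + exact/cvg_at_left_filter/cF.
- by move=> x _; rewrite derive1E; exact: derive_val.
Qed.

Lemma Rintegral_Re_cexp_line u w a b : a < b -> w != 0 ->
  \int[lebesgue_measure]_(x in `[a, b]) complex.Re (u * cexp (x%:C * w)) =
  complex.Re (u / w * (cexp (b%:C * w) - cexp (a%:C * w))).
Proof.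
move=> ab w0; rewrite mulrBr Re_sub.
apply: (Rintegral_derive (fun y => complex.Re (u / w * cexp (y%:C * w)))) => //.
- by move=> x; have := is_derive_Re_cexp_line (u / w) w x; rewrite divfK.
- exact: is_derive_continuous (is_derive_Re_cexp_line u w).
Qed.

Lemma cintegral_cexp_line u w a b : a < b -> w != 0 ->
  cintegral `[a, b] (fun x => u * cexp (x%:C * w)) =
  u / w * (cexp (b%:C * w) - cexp (a%:C * w)).
Proof.
move=> ab w0; rewrite [RHS]complexE /cintegral Rintegral_Re_cexp_line //.
congr (_ + 'i * _%:C).
transitivity (\int[lebesgue_measure]_(x in `[a, b])
    complex.Re ((- 'i * u) * cexp (x%:C * w))).
  by apply: eq_Rintegral => x _; rewrite Im_as_Re mulrA.
by rewrite Rintegral_Re_cexp_line // Im_as_Re !mulrA.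
Qed.

Lemma cintegral_const u a b : a < b ->
  cintegral `[a, b] (fun=> u) = u * (b - a)%:C.
Proof.
move=> ab; rewrite /cintegral !Rintegral_cst //.
rewrite [X in fine X]lebesgue_measure_itv /= lte_fin ab /=.
by case: u => p q; simpc.
Qed.

Lemma cintegral_indicator (D A : set R) (h : R -> R[i]) : A `<=` D ->
  cintegral D (fun x => (\1_A x)%:C * h x) = cintegral A h.
Proof.
move=> AD; rewrite /cintegral -[in RHS](setIidr AD) !Rintegral_mkcondr.
by congr (_%:C + 'i * _%:C); apply: eq_Rintegral => x _;
  rewrite ?Re_realM ?Im_realM patchE indicE; case: (x \in A); rewrite ?mul1r ?mul0r.
Qed.

Lemma cintegral_indicator_fourier (D : set R) a b k (z : R[i]) :
  `[a, b] `<=` D -> a < b ->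
  cintegral D (fun xi => (k * \1_`[a, b] xi)%:C * cexp (2%:R * pi%:C * 'i * xi%:C * z)) =
  (k * (b - a))%:C * (sinc ((b - a)%:C * z) * cexp (pi%:C * 'i * (a + b)%:C * z)).
Proof.
move=> abD ab.
rewrite (_ : (fun xi => _) = fun xi =>
    (\1_`[a, b] xi)%:C * (k%:C * cexp (xi%:C * (2%:R * pi%:C * 'i * z)))); last first.
  apply: funext => xi; rewrite rmorphM /=.
  have -> : 2%:R * pi%:C * 'i * xi%:C * z = xi%:C * (2%:R * pi%:C * 'i * z) by ring.
  ring.
rewrite (@cintegral_indicator D _
  (fun xi => k%:C * cexp (xi%:C * (2%:R * pi%:C * 'i * z)))) //.
have [->|z0] := eqVneq z 0.
  rewrite !mulr0 /sinc eqxx mul1r (cexp0 R) mulr1.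
  rewrite (_ : (fun _ => _) = fun=> k%:C) ?cintegral_const ?rmorphM //.
  by apply: funext => x; rewrite mulr0 (cexp0 R) mulr1.
set w := 2%:R * pi%:C * 'i * z.
have w0 : w != 0 by rewrite /w !mulf_neq0 ?Ci_neq0 ?Cpi_neq0 // pnatr_eq0.
have ba : (b - a)%:C != 0 :> R[i] by rewrite Creal_eq0 subr_eq0 gt_eqF.
rewrite cintegral_cexp_line // sinc_modulation // -/w rmorphM.
by field; rewrite w0 -rmorphB ba.
Qed.

Lemma L2on_indicator (lo hi k : R) (A : set R) : measurable A ->
  L2on lo hi (fun x => (k * \1_A x)%:C).
Proof.
move=> mA.
have mkA : measurable_fun `[lo, hi] (fun x : R => k * \1_A x).
  exact: measurable_realfun.measurable_funM (measurable_cst k)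
    (measurable_realfun.measurable_indic (D := `[lo, hi]) mA).
have finite_itv : (lebesgue_measure (`[lo, hi] : set R) < +oo)%E.
  by rewrite lebesgue_measure_itv /=; case: ifP => _; rewrite -?EFinB ?ltry.
split; [exact: mkA | split; first exact: measurable_cst].
apply: (@le_lt_trans _ _ (\int[lebesgue_measure]_(x in `[lo, hi]) (k ^+ 2)%:E)%E).
  apply: ge0_le_integral => //.
  - by move=> x _; rewrite lee_fin addr_ge0 // sqr_ge0.
  - apply/measurable_realfun.measurable_EFinP.
    rewrite (_ : (fun x => _) = fun x => (k * \1_A x) ^+ 2); last first.
      by apply: funext => x /=; rewrite expr0n /= addr0.
    exact: measurable_realfun.measurable_funX.
  - move=> x _; rewrite lee_fin /= expr0n /= addr0 indicE.
    by case: (x \in A); rewrite ?mulr1 ?mulr0 ?expr0n //= sqr_ge0.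
by rewrite integral_cst //; apply: lte_mul_pinfty => //; rewrite lee_fin sqr_ge0.
Qed.

End LineIntegrals.

Section RealLine.
Variable R : realType.
Implicit Types (e th t r s x : R).

Lemma sinc_chirp_real e th t :
  sinc (e%:C * t%:C) * cexp (pi%:C * 'i * th%:C * t%:C) =
  (sincR (e * t))%:C * (cos (pi * th * t) +i* sin (pi * th * t)).
Proof.
rewrite -rmorphM sinc_real -cexp_iR; congr (_ * cexp _).
by rewrite !rmorphM; ring.
Qed.

Lemma sinc_chirpN_real e th t :
  sinc (e%:C * t%:C) * cexp (- (pi%:C * 'i * th%:C * t%:C)) =
  (sincR (e * t))%:C * (cos (pi * th * t) +i* - sin (pi * th * t)).
Proof.
rewrite -rmorphM sinc_real -cexp_iRN; congr (_ * cexp (- _)).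
by rewrite !rmorphM; ring.
Qed.

(* phases half a turn apart: u * conj v is real, so it equals conj u * v *)
Lemma antiphase_product r s x :
  (r%:C * (cos x +i* sin x)) * (s%:C * (cos (x - pi) +i* sin (x - pi)))^* =
  (r%:C * (cos x +i* - sin x)) * (s%:C * (cos (x - pi) +i* - sin (x - pi)))^*.
Proof.
rewrite cosB sinB cospi sinpi; simpc.
by apply/eqP; rewrite eq_complex /=; apply/andP; split; apply/eqP; ring.
Qed.

Lemma conj_phase_eq r x : r%:C * (cos x +i* sin x) = r%:C * (cos x +i* - sin x) ->
  r * sin x = 0.
Proof. by simpc => /eqP; rewrite eq_complex /= => /andP[_ /eqP]; lra. Qed.

End RealLine.

Section SincPair.
Variables (R : realType) (B eps : R).
Hypotheses (hB : 0 < B) (heps0 : 0 < eps) (heps1 : eps < 2 * B).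

Definition sinc_up (z : R[i]) : R[i] :=
  sinc (eps%:C * z) * cexp (pi%:C * 'i * (2 * B - eps)%:C * z).

Definition sinc_down (z : R[i]) : R[i] :=
  sinc (eps%:C * z) * cexp (- (pi%:C * 'i * (2 * B - eps)%:C * z)).

Let eps_neq0 : eps != 0. Proof. by rewrite gt_eqF. Qed.

Let up_window_lt : B - eps < B. Proof. by move: heps0; lra. Qed.
Let down_window_lt : - B < - B + eps. Proof. by move: heps0; lra. Qed.

Let up_window_sub : `[B - eps, B] `<=` `[- B, B].
Proof. by apply: subset_itvr; rewrite bnd_simp; move: hB heps1; lra. Qed.

Let down_window_sub : `[- B, - B + eps] `<=` `[- B, B].
Proof. by apply: subset_itvl; rewrite bnd_simp; move: hB heps1; lra. Qed.

Lemma sinc_up_fourier k z : cintegral `[- B, B] (fun xi =>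
    (k * \1_`[B - eps, B] xi)%:C * cexp (2%:R * pi%:C * 'i * xi%:C * z)) =
  (k * eps)%:C * sinc_up z.
Proof.
rewrite cintegral_indicator_fourier //.
have -> : B - (B - eps) = eps by ring.
by have -> : B - eps + B = 2 * B - eps by ring.
Qed.

Lemma sinc_down_fourier k z : cintegral `[- B, B] (fun xi =>
    (k * \1_`[- B, - B + eps] xi)%:C * cexp (2%:R * pi%:C * 'i * xi%:C * z)) =
  (k * eps)%:C * sinc_down z.
Proof.
rewrite cintegral_indicator_fourier //.
have -> : - B + eps - - B = eps by ring.
have -> : - B + (- B + eps) = - (2 * B - eps) by ring.
by rewrite /sinc_down rmorphN mulrN mulNr.
Qed.

Lemma PW_sinc_up : PW B sinc_up.
Proof.
exists (fun xi => (eps^-1 * \1_`[B - eps, B] xi)%:C).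
split; first exact: L2on_indicator.
by move=> z; rewrite sinc_up_fourier mulVf // mul1r.
Qed.

Lemma PW_sinc_down : PW B sinc_down.
Proof.
exists (fun xi => (eps^-1 * \1_`[- B, - B + eps] xi)%:C).
split; first exact: L2on_indicator.
by move=> z; rewrite sinc_down_fourier mulVf // mul1r.
Qed.

Lemma sinc_up_window z : sinc_up z = (eps^-1)%:C * cintegral `[- B, B]
    (fun xi => (\1_`[B - eps, B] xi)%:C * cexp (2%:R * pi%:C * 'i * xi%:C * z)).
Proof.
rewrite (_ : (fun xi => _) = fun xi =>
    (1 * \1_`[B - eps, B] xi)%:C * cexp (2%:R * pi%:C * 'i * xi%:C * z)).
  by rewrite sinc_up_fourier mul1r mulrA -rmorphM mulVf // mul1r.
by apply: funext => xi; rewrite mul1r.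
Qed.

Lemma sinc_down_window z : sinc_down z = (eps^-1)%:C * cintegral `[- B, B]
    (fun xi => (\1_`[- B, - B + eps] xi)%:C * cexp (2%:R * pi%:C * 'i * xi%:C * z)).
Proof.
rewrite (_ : (fun xi => _) = fun xi =>
    (1 * \1_`[- B, - B + eps] xi)%:C * cexp (2%:R * pi%:C * 'i * xi%:C * z)).
  by rewrite sinc_down_fourier mul1r mulrA -rmorphM mulVf // mul1r.
by apply: funext => xi; rewrite mul1r.
Qed.

Let theta := pi * (2 * B - eps).

Lemma sinc_up_real t :
  sinc_up t%:C = (sincR (eps * t))%:C * (cos (theta * t) +i* sin (theta * t)).
Proof. exact: sinc_chirp_real. Qed.

Lemma sinc_down_real t :
  sinc_down t%:C = (sincR (eps * t))%:C * (cos (theta * t) +i* - sin (theta * t)).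
Proof. exact: sinc_chirpN_real. Qed.

Lemma sinc_pair_modulus t : `|sinc_up t%:C| = `|sinc_down t%:C|.
Proof. by rewrite sinc_up_real sinc_down_real !normrM !normc_def /= sqrrN. Qed.

(* the shift c = 1 / (2B - eps) turns the phase by pi *)
Lemma sinc_pair_phase_products t (c := (2 * B - eps)^-1) :
  sinc_up t%:C * (sinc_up (t - c)%:C)^* = sinc_down t%:C * (sinc_down (t - c)%:C)^*.
Proof.
rewrite !sinc_up_real !sinc_down_real.
have -> : theta * (t - c) = theta * t - pi.
  by rewrite /theta /c mulrBr mulfK // gt_eqF // subr_gt0.
exact: antiphase_product.
Qed.

(* f = e^{i alpha} g forces e^{i alpha} = 1 at z = 0, so f(t) would be real,
   but Im f(t) > 0 at t = 1 / (2B) *)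
Lemma sinc_pair_not_proportional :
  ~ (exists alpha : R, forall z : R[i], sinc_up z = cexp ('i * alpha%:C) * sinc_down z).
Proof.
case=> al fg.
have phase1 : cexp ('i * al%:C) = 1.
  have := fg 0%:C; rewrite sinc_up_real sinc_down_real.
  rewrite !mulr0 /sincR eqxx cos0 sin0 oppr0.
  have -> : 1%:C * (1 +i* 0) = 1 :> R[i] by simpc.
  by rewrite mulr1.
set t0 := (2 * B)^-1.
have B2 : 0 < 2 * B by rewrite mulr_gt0.
have eps_t0 : 0 < eps * t0 < 1 by rewrite mulr_gt0 ?invr_gt0 //= ltr_pdivrMr // mul1r.
have th_t0 : 0 < (2 * B - eps) * t0 < 1.
  by rewrite mulr_gt0 ?invr_gt0 ?subr_gt0 //= ltr_pdivrMr // mul1r; move: heps0; lra.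
have := fg t0%:C; rewrite sinc_up_real sinc_down_real.
rewrite phase1 mul1r => /conj_phase_eq /eqP.
by rewrite mulf_eq0 gt_eqF ?sincR_gt0 // /theta -mulrA gt_eqF ?sin_pi_gt0.
Qed.

End SincPair.

Theorem mainTheorem9 (R : realType) (B eps : R)
  (hB : 0 < B) (heps0 : 0 < eps) (heps1 : eps < 2 * B) :
  let c := (2 * B - eps)^-1 in
  let f := fun z : R[i] =>
    sinc (eps%:C * z) * cexp (pi%:C * 'i * (2 * B - eps)%:C * z) in
  let g := fun z : R[i] =>
    sinc (eps%:C * z) * cexp (- (pi%:C * 'i * (2 * B - eps)%:C * z)) in
  PW B f /\ PW B g /\
      (forall z : R[i], f z = (eps^-1)%:C * cintegral `[- B, B]
          (fun xi => (\1_(`[B - eps, B]) xi)%:C * cexp (2%:R * pi%:C * 'i * xi%:C * z))) /\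
      (forall z : R[i], g z = (eps^-1)%:C * cintegral `[- B, B]
          (fun xi => (\1_(`[- B, - B + eps]) xi)%:C * cexp (2%:R * pi%:C * 'i * xi%:C * z))) /\
      (forall t : R, `|f t%:C| = `|g t%:C|) /\
      (forall t : R, f t%:C * (f (t - c)%:C)^* = g t%:C * (g (t - c)%:C)^*) /\
      ~ (exists alpha : R, forall z : R[i], f z = cexp ('i * alpha%:C) * g z).
Proof.
move=> c f g.
split; first exact: PW_sinc_up.
split; first exact: PW_sinc_down.
split; first exact: sinc_up_window.
split; first exact: sinc_down_window.
split; first exact: sinc_pair_modulus.
split; first exact: sinc_pair_phase_products.
exact: sinc_pair_not_proportional.
Qed.
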